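(* Let $B$ be a minimum-weight basis of the weighted uncertainty matroid $\mathcal{M}=(E,\mathcal{I},A,w)$. A set $Q\subseteq E$ is a certificate that verifies $B$ if and only if for every $f\in E\setminus B$ and every $e\in C_f\setminus\{f\}$, where $C_f$ is the fundamental circuit of $f$ with respect to $B$, we have $U_e(Q)\le L_f(Q)$.
   Context: A weighted uncertainty matroid $\mathcal{M}=(E,\mathcal{I},A,w)$ consists of a matroid $M=(E,\mathcal{I})$ on a finite set $E$, for each $e\in E$ a non-empty finite union $A_e$ of bounded real intervals (each open or closed), and a weight $w_e\in A_e$. Let $L_e=\inf A_e$, $U_e=\sup A_e$. A minimum-weight basis is a basis of $M$ minimizing the sum of weights $w$. A weight assignment is $w^*:E\to\mathbb{R}$ with $w^*_e\in A_e$, consistent with $Q$ if $w^*_e=w_e$ for $e\in Q$. $Q$ verifies $B$ (is a certificate for $B$) if for every weight assignment consistent with $Q$, $B$ is a minimum-weight basis with respect to it. For $Q\subseteq E$: $L_e(Q)=w_e$ if $e\in Q$, else $L_e$; $U_e(Q)=w_e$ if $e\in Q$, else $U_e$. For a basis $B$ and $f\notin B$, the fundamental circuit $C_f$ is the unique circuit contained in $B\cup\{f\}$. *)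

From mathcomp Require Import all_boot all_order all_algebra.
From mathcomp Require Import boolp classical_sets reals.
Set Implicit Arguments. Unset Strict Implicit. Unset Printing Implicit Defensive.
Import Order.TTheory GRing.Theory Num.Theory.
Local Open Scope ring_scope.
Local Open Scope classical_set_scope.

Record matroid (E : finType) := Matroid {
  indep : {set E} -> bool;
  indep0 : indep (@finset.set0 E);
  indep_sub : forall X Y : {set E}, X \subset Y -> indep Y -> indep X;
  indep_exch : forall X Y : {set E}, indep X -> indep Y -> (#|X| < #|Y|)%N ->
      exists2 y, y \in Y :\: X & indep (y |: X)
}.

Definition is_basis (E : finType) (M : matroid E) (B : {set E}) : bool :=
  maxset (indep M) B.
Definition is_circuit (E : finType) (M : matroid E) (C : {set E}) : bool :=
  minset (fun X => ~~ indep M X) C.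

Record uinterval (R : realType) := UInterval { lo : R; hi : R; closed : bool }.
Definition in_uinterval (R : realType) (I : uinterval R) (x : R) : bool :=
  if closed I then (lo I <= x) && (x <= hi I) else (lo I < x) && (x < hi I).

Definition area (R : realType) (s : seq (uinterval R)) : set R :=
  [set x | has (fun I => in_uinterval I x) s].

Definition Lb (R : realType) (s : seq (uinterval R)) : R := inf (area s).
Definition Ub (R : realType) (s : seq (uinterval R)) : R := sup (area s).

Definition LQ (R : realType) (E : finType) (A : E -> seq (uinterval R))
  (w : E -> R) (Q : {set E}) (e : E) : R := if e \in Q then w e else Lb (A e).
Definition UQ (R : realType) (E : finType) (A : E -> seq (uinterval R))
  (w : E -> R) (Q : {set E}) (e : E) : R := if e \in Q then w e else Ub (A e).

Definition weight (R : realType) (E : finType) (w : E -> R) (B : {set E}) : R :=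
  \sum_(e in B) w e.

Definition min_weight_basis (R : realType) (E : finType) (M : matroid E)
  (w : E -> R) (B : {set E}) : Prop :=
  is_basis M B /\ forall B', is_basis M B' -> weight w B <= weight w B'.

Definition consistent (R : realType) (E : finType) (A : E -> seq (uinterval R))
  (w : E -> R) (Q : {set E}) (w' : E -> R) : Prop :=
  (forall e, area (A e) (w' e)) /\ (forall e, e \in Q -> w' e = w e).

Definition verifies (R : realType) (E : finType) (M : matroid E)
  (A : E -> seq (uinterval R)) (w : E -> R) (Q B : {set E}) : Prop :=
  forall w' : E -> R, consistent A w Q w' -> min_weight_basis M w' B.

From Pilot Require Import Defs.
From mathcomp Require Import all_boot all_order all_algebra.
From mathcomp Require Import boolp classical_sets reals.
From mathcomp Require Import lra.
Import fintype finset.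
Import Order.TTheory GRing.Theory Num.Theory.
Set Implicit Arguments. Unset Strict Implicit.

(* A basis B is of minimum weight as soon as no fundamental-circuit exchange
   f |: (B :\ e) is lighter: given another basis B', the circuit exchange
   property produces a basis e |: (B' :\ f) no heavier than B' and closer to B,
   so induction on |B' \ B| applies.  Write feasible e for the set of values
   of w*_e that remain possible once Q is known; U_e(Q) and L_e(Q) are its sup
   and inf.  If U_e(Q) <= L_f(Q) on every fundamental circuit, any consistent
   w* satisfies w*_e <= U_e(Q) <= L_f(Q) <= w*_f, so B is optimal for it.
   Conversely, feasible values x of e and y of f extend to a consistent w*;
   optimality of B against the basis f |: (B :\ e) forces x <= y, whence
   sup <= inf. *)

Section MatroidExchange.

Variables (E : finType) (M : matroid E).
Implicit Types (B C X Y Z : {set E}) (e f : E).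

Lemma indep_augment X Y :
  indep M X -> indep M Y -> #|X| <= #|Y| ->
  exists Z, [/\ indep M Z, X \subset Z, Z \subset X :|: Y & #|Z| = #|Y|].
Proof.
move=> + iY /subnKC; move: (#|Y| - #|X|) => n.
elim: n X => [|n IH] X iX cXY.
  by exists X; rewrite subxx finset.subsetUl -cXY addn0.
have [|y /setDP[yY yX] iyX] := indep_exch iX iY.
  by rewrite -cXY addnS ltnS leq_addr.
have [|Z [iZ syXZ sZ cZ]] := IH _ iyX; first by rewrite cardsU1 yX add1n addSnnS.
exists Z; split=> //; first exact: subset_trans (subsetU1 y X) syXZ.
apply: (subset_trans sZ); apply/subsetP => x.
by rewrite !inE => /orP[/orP[/eqP->|->]|->]; rewrite ?yY ?orbT.
Qed.

Lemma basis_card_max B Y : is_basis M B -> indep M Y -> #|Y| <= #|B|.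
Proof.
move=> /maxsetP[iB maxB] iY; rewrite leqNgt; apply/negP => ltBY.
have [y /setDP[_ yB] iyB] := indep_exch iB iY ltBY.
by move: yB; rewrite -(maxB _ iyB (finset.subsetUr _ _)) setU11.
Qed.

Lemma card_basis B B' : is_basis M B -> is_basis M B' -> #|B| = #|B'|.
Proof.
move=> bB bB'; apply/eqP; rewrite eqn_leq.
by rewrite !basis_card_max ?(maxsetp bB) ?(maxsetp bB').
Qed.

Lemma basis_of_card B X : is_basis M B -> indep M X -> #|X| = #|B| -> is_basis M X.
Proof.
move=> bB iX cX; apply/maxsetP; split=> // Y iY sXY.
by apply/eqP; rewrite eq_sym eqEcard sXY cX basis_card_max.
Qed.

Lemma circuit_dep C : is_circuit M C -> ~~ indep M C.
Proof. by case/minsetP. Qed.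

Lemma circuitD1_indep C e : is_circuit M C -> e \in C -> indep M (C :\ e).
Proof.
move=> /minsetP[_ minC] eC; apply: contraT => depCe.
by move: eC; rewrite -(minC _ depCe (subD1set _ _)) setD11.
Qed.

Lemma notin_indep_supset_circuitD1 C Z e :
  is_circuit M C -> C :\ e \subset Z -> indep M Z -> e \notin Z.
Proof.
move=> cC sCeZ iZ; apply: contra (circuit_dep cC) => eZ; apply: indep_sub iZ.
apply/subsetP => x xC; case: (eqVneq x e) => [->//|xe].
by apply: (subsetP sCeZ); rewrite !inE xe.
Qed.

Lemma circuitD1_extend_basis C Y e :
  is_circuit M C -> e \in C -> is_basis M Y ->
  exists Z, [/\ is_basis M Z, C :\ e \subset Z, Z \subset (C :\ e) :|: Y & e \notin Z].
Proof.
move=> cC eC bY; have iCe := circuitD1_indep cC eC.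
have [Z [iZ sCeZ sZ cZ]] := indep_augment iCe (maxsetp bY) (basis_card_max bY iCe).
exists Z; split=> //; first exact: basis_of_card bY iZ cZ.
exact: notin_indep_supset_circuitD1 cC sCeZ iZ.
Qed.

Lemma basisU1_dep B f : is_basis M B -> f \notin B -> ~~ indep M (f |: B).
Proof.
move=> /maxsetP[_ maxB] fB; apply: contra fB => ifB.
by rewrite -(maxB _ ifB (subsetU1 _ _)) setU11.
Qed.

Lemma circuit_subset_basisU1 B f :
  is_basis M B -> f \notin B -> exists C, is_circuit M C /\ C \subset f |: B.
Proof.
move=> bB fB.
have [C minC sC] := @minset_exists _ (fun X => ~~ indep M X) _ (basisU1_dep bB fB).
by exists C.
Qed.

Lemma basisU1_circuit_mem B C f :
  is_basis M B -> is_circuit M C -> C \subset f |: B -> f \in C.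
Proof.
move=> bB cC sC; apply: contraR (circuit_dep cC) => fC.
apply: indep_sub (maxsetp bB); apply/subsetP => x xC.
by move: (subsetP sC x xC); rewrite !inE; case: eqP xC fC => // -> ->.
Qed.

Lemma fundamental_circuit_exchange B C f e :
  is_basis M B -> f \notin B -> is_circuit M C -> C \subset f |: B ->
  e \in C -> e != f -> is_basis M (f |: (B :\ e)).
Proof.
move=> bB fB cC sC eC ef.
have eB : e \in B by move: (subsetP sC e eC); rewrite !inE (negbTE ef).
have [Z [bZ _ sZ eZ]] := circuitD1_extend_basis cC eC bB.
suff -> : f |: (B :\ e) = Z by [].
apply/eqP; rewrite eq_sym eqEcard; apply/andP; split.
  apply/subsetP => x xZ; move: (subsetP sZ x xZ).
  have xe : x != e by apply: contraNneq eZ => <-.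
  rewrite !inE xe /= => /orP[/(subsetP sC)|->]; last by rewrite orbT.
  by rewrite !inE.
by rewrite cardsU1 !inE negb_and fB orbT add1n (card_basis bZ bB) (cardsD1 e B) eB.
Qed.

Lemma circuit_exchange_basis B C f :
  is_basis M B -> f \in B -> is_circuit M C -> f \in C ->
  exists2 e, e \in C :\: B & is_basis M (e |: (B :\ f)).
Proof.
move=> bB fB cC fC.
have [Z [bZ _ sZ fZ]] := circuitD1_extend_basis cC fC bB.
have iBf : indep M (B :\ f) := indep_sub (subD1set _ _) (maxsetp bB).
have [|e /setDP[eZ eBf] ieBf] := indep_exch iBf (maxsetp bZ).
  by rewrite (card_basis bZ bB) (cardsD1 f B) fB.
have ef : e != f by apply: contraNneq fZ => <-.
have eB : e \notin B by move: eBf; rewrite !inE ef.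
exists e; last by apply: basis_of_card bB ieBf _; rewrite cardsU1 eBf (cardsD1 f B) fB.
by move: (subsetP sZ e eZ); rewrite !inE ef (negbTE eB) orbF.
Qed.

End MatroidExchange.

Lemma card_swap_setD_lt (E : finType) (B B' : {set E}) e f :
  e \in B -> f \in B' :\: B -> #|(e |: (B' :\ f)) :\: B| < #|B' :\: B|.
Proof.
move=> eB fB'B; rewrite (cardsD1 f (B' :\: B)) fB'B add1n ltnS subset_leq_card //.
apply/subsetP => x; rewrite !inE.
by case: eqP => [->|_]; rewrite ?eB ?andbF //= => /andP[-> /andP[-> ->]].
Qed.

Local Open Scope ring_scope.

Section MinWeightBasis.

Variables (R : realType) (E : finType) (M : matroid E).
Implicit Types (B C X : {set E}) (e f : E) (w : E -> R).

Definition circuit_le B (u l : E -> R) : Prop :=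
  forall f, f \notin B -> forall C, is_circuit M C -> C \subset f |: B ->
  forall e, e \in C -> e != f -> u e <= l f.

Lemma weight_swap w X e f :
  f \in X -> e \notin X -> weight w (e |: (X :\ f)) = weight w X + w e - w f.
Proof.
move=> fX eX; rewrite /weight big_setU1 ?inE ?(negbTE eX) ?andbF //=.
by rewrite [in RHS](big_setD1 f fX) /=; lra.
Qed.

Lemma min_weight_basis_of_circuit_le w B :
  is_basis M B -> circuit_le B w w -> min_weight_basis M w B.
Proof.
move=> bB wBle; split=> // B' bB'; have [n] := ubnP #|B' :\: B|.
elim: n B' bB' => // n IH B' bB'; rewrite ltnS => cB'B.
have [sB'B|/subsetPn[f fB' fB]] := boolP (B' \subset B).
  by rewrite ((maxsetP bB').2 _ (maxsetp bB) sB'B).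
have [C [cC sC]] := circuit_subset_basisU1 bB fB.
have fC := basisU1_circuit_mem bB cC sC.
have [e /setDP[eC eB'] bB''] := circuit_exchange_basis bB' fB' cC fC.
have ef : e != f by apply: contraNneq eB' => ->.
have eB : e \in B by move: (subsetP sC e eC); rewrite !inE (negbTE ef).
apply: le_trans (IH _ bB'' _) _.
  by apply: leq_trans cB'B; apply: card_swap_setD_lt; rewrite // !inE fB.
by rewrite weight_swap //; have := wBle f fB C cC sC e eC ef; lra.
Qed.

Lemma circuit_le_of_min_weight_basis w B :
  min_weight_basis M w B -> circuit_le B w w.
Proof.
move=> [bB minB] f fB C cC sC e eC ef.
have eB : e \in B by move: (subsetP sC e eC); rewrite !inE (negbTE ef).
have := minB _ (fundamental_circuit_exchange bB fB cC sC eC ef).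
by rewrite weight_swap //; lra.
Qed.

End MinWeightBasis.

Local Open Scope classical_set_scope.

Lemma sup_le_inf (R : realType) (S T : set R) :
  S !=set0 -> T !=set0 -> (forall x y, S x -> T y -> x <= y) -> sup S <= inf T.
Proof.
move=> S0 T0 leST; apply: ge_sup S0 _ => x Sx.
by apply: lb_le_inf => // y Ty; apply: leST.
Qed.

Lemma area_has_ubound (R : realType) (s : seq (uinterval R)) : has_ubound (area s).
Proof.
elim: s => [|I s [m ubm]]; first by exists 0.
exists (Num.max (hi I) m) => y /orP[|/ubm ym]; last by rewrite le_max ym orbT.
rewrite /in_uinterval le_max.
by case: (Defs.closed I) => /andP[_ yI]; rewrite ?yI ?(ltW yI).
Qed.

Lemma area_has_lbound (R : realType) (s : seq (uinterval R)) : has_lbound (area s).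
Proof.
elim: s => [|I s [m lbm]]; first by exists 0.
exists (Num.min (lo I) m) => y /orP[|/lbm my]; last by rewrite ge_min my orbT.
rewrite /in_uinterval ge_min.
by case: (Defs.closed I) => /andP[Iy _]; rewrite ?Iy ?(ltW Iy).
Qed.

Section Feasibility.

Variables (R : realType) (E : finType) (A : E -> seq (uinterval R)) (w : E -> R).
Variable Q : {set E}.
Hypothesis w_in_area : forall e, area (A e) (w e).

Definition feasible (e : E) : set R := if e \in Q then [set w e] else area (A e).

Lemma UQ_sup e : UQ A w Q e = sup (feasible e).
Proof. by rewrite /UQ /feasible; case: ifP; rewrite ?sup1. Qed.

Lemma LQ_inf e : LQ A w Q e = inf (feasible e).
Proof. by rewrite /LQ /feasible; case: ifP; rewrite ?inf1. Qed.

Lemma feasible_w e : feasible e (w e).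
Proof. by rewrite /feasible; case: ifP. Qed.

Lemma feasible_has_ubound e : has_ubound (feasible e).
Proof.
by rewrite /feasible; case: ifP => _; [exists (w e) => _ -> | exact: area_has_ubound].
Qed.

Lemma feasible_has_lbound e : has_lbound (feasible e).
Proof.
by rewrite /feasible; case: ifP => _; [exists (w e) => _ -> | exact: area_has_lbound].
Qed.

Lemma consistentP w' : consistent A w Q w' <-> forall e, feasible e (w' e).
Proof.
rewrite /feasible; split=> [[inA eqQ] e|Fw']; first by case: ifPn => // /eqQ.
by split=> e; move: (Fw' e); case: ifPn => // _ ->; apply: w_in_area.
Qed.

Lemma feasible_update e f x y : e != f -> feasible e x -> feasible f y ->
  exists w', [/\ forall g, feasible g (w' g), w' e = x & w' f = y].
Proof.
move=> ef Fx Fy; exists (fun g => if g == e then x else if g == f then y else w g).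
rewrite eqxx eq_sym (negbTE ef) eqxx; split=> // g.
by case: eqP => [->|_] //; case: eqP => [->|_] //; apply: feasible_w.
Qed.

End Feasibility.

Theorem corollary9 (R : realType) (E : finType) (M : matroid E)
  (A : E -> seq (uinterval R)) (w : E -> R)
  (hw : forall e, area (A e) (w e))
  (B : {set E}) (hB : min_weight_basis M w B) (Q : {set E}) :
  verifies M A w Q B <->
  (forall f, f \notin B -> forall C : {set E}, is_circuit M C -> C \subset f |: B ->
     forall e, e \in C -> e != f -> UQ A w Q e <= LQ A w Q f).
Proof.
have feasibleP := consistentP Q hw.
have feasible_neq0 g : feasible A w Q g !=set0 by exists (w g); apply: feasible_w.
split=> [verB f fB C cC sC e eC ef | UQleLQ w' /feasibleP Fw'].
- rewrite UQ_sup LQ_inf.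
  apply: sup_le_inf (feasible_neq0 e) (feasible_neq0 f) _ => x y Fx Fy.
  have [w' [Fw' <- <-]] := feasible_update hw ef Fx Fy.
  have mwB : min_weight_basis M w' B by apply/verB/feasibleP.
  exact: circuit_le_of_min_weight_basis mwB f fB C cC sC e eC ef.
- apply: min_weight_basis_of_circuit_le hB.1 _ => f fB C cC sC e eC ef.
  have le_UQ : w' e <= UQ A w Q e.
    by rewrite UQ_sup; apply: ub_le_sup (Fw' e); apply: feasible_has_ubound.
  have LQ_le : LQ A w Q f <= w' f.
    by rewrite LQ_inf; apply: ge_inf (Fw' f); apply: feasible_has_lbound.
  exact: le_trans le_UQ (le_trans (UQleLQ f fB C cC sC e eC ef) LQ_le).
Qed.
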